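(* Fix a real number $\beta>-1$. If $\phi$ is a hyperbolic linear fractional self-map of $\mathbb{D}$, then the composition operator $C_\phi f=f\circ\phi$ is not complex symmetric on $A^2_\beta$.
   Context: $\mathbb{D}$ is the open unit disc and $\mathbb{T}$ the unit circle. For $\beta>-1$, $A^2_\beta$ is the Hilbert space of analytic functions $f(z)=\sum_{n\ge0}\widehat f(n)z^n$ on $\mathbb{D}$ with inner product $\langle f,g\rangle=\sum_{n\ge0}\frac{n!\,\Gamma(2+\beta)}{\Gamma(n+2+\beta)}\widehat f(n)\overline{\widehat g(n)}$ (equivalently the $L^2$ inner product with respect to $(\beta+1)(1-|z|^2)^\beta dA(z)$). A conjugation is a conjugate-linear map $C$ with $C^2=I$ and $\langle Cf,Cg\rangle=\langle g,f\rangle$; a bounded operator $T$ is complex symmetric if $CT=T^*C$ for some conjugation $C$. A linear fractional self-map of $\mathbb{D}$ is a map $\phi(z)=(az+b)/(cz+d)$ (with $ad-bc\neq0$) mapping $\mathbb{D}$ into $\mathbb{D}$. Following the paper, such a $\phi$ is called hyperbolic if it has an attractive fixed point $\omega\in\overline{\mathbb{D}}$ (the iterates $\phi^{[n]}$ converge to $\omega$ uniformly on compact subsets of $\mathbb{D}$) and its other fixed point lies outside $\mathbb{D}$; both fixed points lie on $\mathbb{T}$ exactly when $\phi$ is an automorphism. The paper separately calls parabolic those maps whose (unique) fixed point lies on $\mathbb{T}$, and loxodromic or elliptic those with one fixed point in $\mathbb{D}$ and the other outside $\overline{\mathbb{D}}$; these are not hyperbolic. *)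

From Stdlib Require Import Reals.
From Coquelicot Require Import Coquelicot.

Open Scope R_scope.

Notation CC := Complex.C.

(* Sum of a complex series, computed componentwise (meaningful when the
   series converges). *)
Definition csum (u : nat -> CC) : CC :=
  (Series (fun n => Re (u n)), Series (fun n => Im (u n))).

(* Weight  n! Gamma(2+beta) / Gamma(n+2+beta) = prod_{k=1}^n k/(k+1+beta). *)
Fixpoint wgt (beta : R) (n : nat) : R :=
  match n with
  | O => 1
  | S m => wgt beta m * (INR (S m) / (INR (S m) + 1 + beta))
  end.

(* Elements of A^2_beta are represented by their Taylor coefficient sequences. *)
Definition inA2 (beta : R) (f : nat -> CC) : Prop :=
  ex_series (fun n => wgt beta n * (Cmod (f n)) ^ 2).

Definition ipA2 (beta : R) (f g : nat -> CC) : CC :=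
  csum (fun n => Cmult (Cmult (RtoC (wgt beta n)) (f n)) (Cconj (g n))).

Definition evalA2 (f : nat -> CC) (z : CC) : CC :=
  csum (fun n => Cmult (f n) (Cpow z n)).

Definition conjugation (beta : R) (Cj : (nat -> CC) -> (nat -> CC)) : Prop :=
  (forall f, inA2 beta f -> inA2 beta (Cj f)) /\
  (forall f g (l : CC), inA2 beta f -> inA2 beta g ->
     Cj (fun n => Cplus (Cmult l (f n)) (g n))
     = (fun n => Cplus (Cmult (Cconj l) (Cj f n)) (Cj g n))) /\
  (forall f, inA2 beta f -> Cj (Cj f) = f) /\
  (forall f g, inA2 beta f -> inA2 beta g ->
     ipA2 beta (Cj f) (Cj g) = ipA2 beta g f).

Definition is_adjoint (beta : R) (T S : (nat -> CC) -> (nat -> CC)) : Prop :=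
  (forall f, inA2 beta f -> inA2 beta (S f)) /\
  (forall f g, inA2 beta f -> inA2 beta g ->
     ipA2 beta (T f) g = ipA2 beta f (S g)).

Definition complex_symmetric (beta : R) (T : (nat -> CC) -> (nat -> CC)) : Prop :=
  exists Cj S, conjugation beta Cj /\ is_adjoint beta T S /\
    forall f, inA2 beta f -> Cj (T f) = S (Cj f).

Definition lft (a b c d : CC) (z : CC) : CC :=
  Cdiv (Cplus (Cmult a z) b) (Cplus (Cmult c z) d).

Definition lf_selfmap (a b c d : CC) : Prop :=
  Cminus (Cmult a d) (Cmult b c) <> RtoC 0 /\
  forall z, Cmod z < 1 -> Cplus (Cmult c z) d <> RtoC 0 /\ Cmod (lft a b c d z) < 1.

(* iterates converge to w uniformly on compact subsets of D
   (equivalently, on every closed subdisc |z| <= r < 1) *)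
Definition attracts (phi : CC -> CC) (w : CC) : Prop :=
  forall r eps, 0 <= r < 1 -> 0 < eps ->
    exists N, forall n z, (N <= n)%nat -> Cmod z <= r ->
      Cmod (Cminus (Nat.iter n phi z) w) < eps.

(* hyperbolic: attractive fixed point w on T, the other fixed point
   (possibly infinity, which is fixed iff c = 0) lies outside D *)
Definition lf_hyperbolic (a b c d : CC) : Prop :=
  exists w, Cmod w = 1 /\ Cplus (Cmult c w) d <> RtoC 0 /\
    lft a b c d w = w /\ attracts (lft a b c d) w /\
    (c = RtoC 0 \/
     exists e, e <> w /\ Cplus (Cmult c e) d <> RtoC 0 /\
       lft a b c d e = e /\ 1 <= Cmod e).

(* Let 1 be the constant function and h = J 1 for a conjugation J with J T = T^* J.  Since
   T 1 = 1, h is fixed by T^*, so <T^n f, h> = <f, h> for every n.  Apply this to the Cauchy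
   kernels k_v(z) = 1 / (1 - v z), |v| < 1: T^n k_v = k_v o phi^n is again a bounded linear
   fractional map, and it converges to the constant k_v(w) uniformly near 0, w being the attractive
   fixed point.  A bounded linear fractional map that is nearly constant near 0 has a small
   derivative at 0, hence a small Taylor tail in A^2_beta, so <k_v, h> = k_v(w) conj (h 0).
   Comparing Taylor coefficients in v gives w_m conj (h m) = conj (h 0) w^m, where w_m are the
   weights of A^2_beta; as |w| = 1 the terms w_m |h m|^2 = |h 0|^2 / w_m >= |h 0|^2 of the
   convergent series for |h|^2 force h = 0, although |h| = |1| = 1. *)

From Stdlib Require Import Reals Lra Psatz FunctionalExtensionality.
From Coquelicot Require Import Coquelicot.

Open Scope R_scope.
Set Bullet Behavior "Strict Subproofs".

Lemma amgm (eps x y : R) : 0 < eps -> x * y <= (eps * x ^ 2 + y ^ 2 / eps) / 2.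
Proof.
  intros Heps.
  assert (0 <= (eps * x - y) ^ 2 / eps) by (apply Rdiv_le_0_compat; [apply pow2_ge_0 | lra]).
  assert ((eps * x ^ 2 + y ^ 2 / eps) / 2 - x * y = (eps * x - y) ^ 2 / eps / 2) by (field; lra).
  lra.
Qed.

Lemma le_of_forall_scale_lt_1 (x y : R) :
  0 <= y -> (forall t, 0 <= t < 1 -> t * x <= y) -> x <= y.
Proof.
  intros Hy H. destruct (Rle_lt_dec x y) as [| Hxy]; [assumption | exfalso].
  assert (Hyx : 0 <= y / x < 1).
  { split; [apply Rdiv_le_0_compat; lra |]. apply (Rdiv_lt_1 y x); lra. }
  specialize (H ((y / x + 1) / 2) ltac:(lra)).
  assert (E : (y / x + 1) / 2 * x = (y + x) / 2) by (field; lra).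
  lra.
Qed.

Lemma Series_zero : Series (fun _ => 0) = 0.
Proof.
  rewrite (Series_ext _ (fun _ => 0 * 0)) by (intros; ring).
  rewrite Series_scal_l. ring.
Qed.

Lemma Series_nonneg (a : nat -> R) : (forall n, 0 <= a n) -> ex_series a -> 0 <= Series a.
Proof.
  intros Ha Hex. rewrite <- Series_zero. apply Series_le; [intros n; split; [lra | apply Ha] | exact Hex].
Qed.

Lemma Series_le_compat (a b : nat -> R) :
  (forall n, a n <= b n) -> ex_series a -> ex_series b -> Series a <= Series b.
Proof.
  intros Hab Ha Hb.
  assert (0 <= Series (fun n => b n - a n)).
  { apply Series_nonneg; [intros n; specialize (Hab n); lra |].
    apply (ex_series_minus (V := R_NormedModule)); assumption. }
  rewrite Series_minus in H by assumption. lra.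
Qed.

Lemma is_series_of_geometric_rate (a : nat -> R) (l k r : R) :
  0 <= r < 1 -> (forall N, Rabs (sum_n a N - l) <= k * r ^ N) -> is_series a l.
Proof.
  intros Hr Hb.
  assert (Hgeom : is_lim_seq (fun N => k * r ^ N) 0).
  { replace (Finite 0) with (Rbar_mult k 0) by (simpl; f_equal; ring).
    apply is_lim_seq_scal_l, is_lim_seq_geom. rewrite Rabs_right; lra. }
  change (is_lim_seq (sum_n a) l).
  apply (is_lim_seq_le_le (fun N => l - k * r ^ N) _ (fun N => l + k * r ^ N)).
  - intros N. specialize (Hb N). apply Rabs_le_between' in Hb. lra.
  - replace (Finite l) with (Rbar_minus l 0) by (simpl; f_equal; ring).
    apply is_lim_seq_minus'; [apply is_lim_seq_const | exact Hgeom].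
  - replace (Finite l) with (Rbar_plus l 0) by (simpl; f_equal; ring).
    apply is_lim_seq_plus'; [apply is_lim_seq_const | exact Hgeom].
Qed.

Lemma CV_radius_pos (a : nat -> R) (r : R) : 0 < r -> CV_disk a r -> Rbar_lt 0 (CV_radius a).
Proof.
  intros Hr Ha. destruct (Lub_Rbar_correct (CV_disk a)) as [Hub _].
  specialize (Hub r Ha). unfold CV_radius.
  destruct (Lub_Rbar (CV_disk a)); simpl in *; lra || exact I || contradiction.
Qed.

Lemma PSeries_coef_unique (a b : nat -> R) (r : R) :
  0 < r -> CV_disk a r -> CV_disk b r ->
  (forall x, Rabs x < r -> PSeries a x = PSeries b x) -> a = b.
Proof.
  intros Hr Ha Hb Hab. apply functional_extensionality. intros m.
  apply PSeries_ext_recip; [apply (CV_radius_pos a r) | apply (CV_radius_pos b r) |]; try assumption.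
  exists (mkposreal r Hr). intros x Hx. apply Hab.
  replace x with (x - 0) by ring. exact Hx.
Qed.

Lemma im_le_Cmod (z : CC) : Rabs (Im z) <= Cmod z.
Proof. eapply Rle_trans; [apply Rmax_r | apply Rmax_Cmod]. Qed.

Lemma ex_series_Re (u : nat -> CC) :
  ex_series (fun n => Cmod (u n)) -> ex_series (fun n => Re (u n)).
Proof. apply (ex_series_le (V := R_CompleteNormedModule)), (fun n => re_le_Cmod (u n)). Qed.

Lemma ex_series_Im (u : nat -> CC) :
  ex_series (fun n => Cmod (u n)) -> ex_series (fun n => Im (u n)).
Proof. apply (ex_series_le (V := R_CompleteNormedModule)), (fun n => im_le_Cmod (u n)). Qed.

Lemma ex_series_Cmod_scal_l (c : CC) (u : nat -> CC) :
  ex_series (fun n => Cmod (u n)) -> ex_series (fun n => Cmod (c * u n)%C).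
Proof.
  intros Hu. apply (ex_series_ext (fun n => Cmod c * Cmod (u n))); [intros; symmetry; apply Cmod_mult |].
  apply (ex_series_scal (V := R_NormedModule)), Hu.
Qed.

Lemma ex_series_Cmod_Cpow (q : CC) : Cmod q < 1 -> ex_series (fun n => Cmod (q ^ n)%C).
Proof.
  intros Hq. apply (ex_series_ext (fun n => Cmod q ^ n)); [intros; symmetry; apply Cmod_pow |].
  apply ex_series_geom. rewrite Rabs_right by (apply Rle_ge, Cmod_ge_0). exact Hq.
Qed.

Lemma csum_ext (u v : nat -> CC) : (forall n, u n = v n) -> csum u = csum v.
Proof.
  intros H. unfold csum.
  rewrite (Series_ext _ _ (fun n => f_equal Re (H n))), (Series_ext _ _ (fun n => f_equal Im (H n))).
  reflexivity.
Qed.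

Section ComplexSeries.

Variable u : nat -> CC.
Hypothesis u_abs : ex_series (fun n => Cmod (u n)).

Lemma csum_shift : csum u = (u 0%nat + csum (fun k => u (S k)))%C.
Proof.
  unfold csum. rewrite (Series_incr_1 _ (ex_series_Re _ u_abs)), (Series_incr_1 _ (ex_series_Im _ u_abs)).
  reflexivity.
Qed.

Lemma csum_scal_l (c : CC) : csum (fun n => c * u n)%C = (c * csum u)%C.
Proof.
  pose proof (ex_series_Re _ u_abs). pose proof (ex_series_Im _ u_abs).
  unfold csum.
  rewrite (Series_ext _ (fun n => Re c * Re (u n) - Im c * Im (u n))) by (intros; apply re_mult).
  rewrite (Series_ext (fun n => Im _) (fun n => Re c * Im (u n) + Im c * Re (u n)))
    by (intros; apply im_mult).
  rewrite Series_minus, Series_plus, !Series_scal_l; try apply (ex_series_scal (V := R_NormedModule));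
    try assumption.
  reflexivity.
Qed.

Lemma Cmod_csum_le : Cmod (csum u) <= Series (fun n => Cmod (u n)).
Proof.
  set (l := csum u).
  assert (Hnorm : 0 <= Series (fun n => Cmod (u n)))
    by (apply Series_nonneg; [intros; apply Cmod_ge_0 | exact u_abs]).
  destruct (Req_dec (Cmod l) 0) as [Hl | Hl]; [lra |].
  assert (Hl0 : 0 < Cmod l) by (pose proof (Cmod_ge_0 l); lra).
  (* |l|^2 = Re (conj l * l) = sum of Re (conj l * u n), each at most |l| |u n| *)
  apply (Rmult_le_reg_l (Cmod l)); [exact Hl0 |].
  assert (E : Cmod l * Cmod l = Series (fun n => Re (Cconj l * u n)%C)).
  { change (Series (fun n => Re (Cconj l * u n)%C)) with (Re (csum (fun n => Cconj l * u n)%C)).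
    rewrite csum_scal_l. fold l. rewrite Cmult_comm, <- Cmod2_conj, re_RtoC. ring. }
  rewrite E, <- Series_scal_l.
  apply Series_le_compat.
  - intros n. eapply Rle_trans; [apply Rle_abs |]. eapply Rle_trans; [apply re_le_Cmod |].
    rewrite Cmod_mult, Cmod_conj. lra.
  - apply ex_series_Re, ex_series_Cmod_scal_l, u_abs.
  - apply (ex_series_scal (V := R_NormedModule)), u_abs.
Qed.

End ComplexSeries.

Lemma Re_sum_n (u : nat -> CC) N : Re (sum_n u N) = sum_n (fun n => Re (u n)) N.
Proof.
  induction N as [| N IH]; [rewrite !sum_O; reflexivity |].
  rewrite !sum_Sn, <- IH. reflexivity.
Qed.

Lemma Im_sum_n (u : nat -> CC) N : Im (sum_n u N) = sum_n (fun n => Im (u n)) N.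
Proof.
  induction N as [| N IH]; [rewrite !sum_O; reflexivity |].
  rewrite !sum_Sn, <- IH. reflexivity.
Qed.

Lemma csum_of_geometric_rate (u : nat -> CC) (l : CC) (k r : R) :
  0 <= r < 1 -> (forall N, Cmod (sum_n u N - l)%C <= k * r ^ N) -> csum u = l.
Proof.
  intros Hr Hb. apply injective_projections; apply is_series_unique;
    apply (is_series_of_geometric_rate _ _ k r Hr); intros N.
  - rewrite <- Re_sum_n. eapply Rle_trans; [| apply (Hb N)].
    exact (re_le_Cmod (sum_n u N - l)%C).
  - rewrite <- Im_sum_n. eapply Rle_trans; [| apply (Hb N)].
    exact (im_le_Cmod (sum_n u N - l)%C).
Qed.

Lemma sum_n_Cpow (q : CC) N : ((1 - q) * sum_n (fun n => q ^ n) N)%C = (1 - q ^ S N)%C.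
Proof.
  induction N as [| N IH]; [rewrite sum_O; simpl; ring |].
  rewrite sum_Sn. change (plus ?x ?y) with (x + y)%C.
  rewrite Cmult_plus_distr_l, IH. simpl. ring.
Qed.

Lemma csum_geom (q : CC) : Cmod q < 1 -> csum (fun n => q ^ n)%C = (/ (1 - q))%C.
Proof.
  intros Hq.
  assert (Hq1 : (1 - q)%C <> 0).
  { intros E. assert (q = 1) by (rewrite <- (Cplus_0_l q), <- E; ring).
    subst q. rewrite Cmod_1 in Hq. lra. }
  apply (csum_of_geometric_rate _ _ (Cmod q / Cmod (1 - q)) (Cmod q));
    [split; [apply Cmod_ge_0 | exact Hq] |].
  intros N.
  assert (Hq1' : Cmod (1 - q) <> 0) by (intros E; apply Hq1, Cmod_eq_0, E).
  pose proof (sum_n_Cpow q N) as E.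
  set (s := sum_n (fun n => q ^ n)%C N) in *.
  replace (s - / (1 - q))%C with (- (q ^ S N / (1 - q)))%C.
  2: { clearbody s. replace (q ^ S N)%C with (1 - (1 - q) * s)%C by (rewrite E; ring).
       field. exact Hq1. }
  rewrite Cmod_opp, Cmod_div, Cmod_pow by exact Hq1.
  change (Cmod q ^ S N) with (Cmod q * Cmod q ^ N). apply Req_le. field. exact Hq1'.
Qed.

Lemma evalA2_geometric (c r z : CC) :
  Cmod (r * z) < 1 -> evalA2 (fun m => c * r ^ m)%C z = (c / (1 - r * z))%C.
Proof.
  intros H. unfold evalA2.
  rewrite (csum_ext _ (fun m => c * (r * z) ^ m)%C) by (intros; rewrite Cpow_mult_l; ring).
  rewrite csum_scal_l, csum_geom by (assumption || apply ex_series_Cmod_Cpow, H).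
  reflexivity.
Qed.

Definition geo_tail (c0 p r : CC) (m : nat) : CC :=
  match m with O => c0 | S k => (p * r ^ k)%C end.

Lemma evalA2_geo_tail (c0 p r z : CC) :
  Cmod (r * z) < 1 -> evalA2 (geo_tail c0 p r) z = (c0 + p * z / (1 - r * z))%C.
Proof.
  intros H. unfold evalA2.
  assert (Htail : forall k, (geo_tail c0 p r (S k) * z ^ S k)%C = (p * z * (r * z) ^ k)%C)
    by (intros; simpl; rewrite Cpow_mult_l; ring).
  rewrite csum_shift.
  - rewrite (csum_ext _ _ Htail), csum_scal_l, csum_geom by (assumption || apply ex_series_Cmod_Cpow, H).
    simpl. unfold Cdiv. ring.
  - apply (ex_series_incr_1 (V := R_NormedModule)).
    apply (ex_series_ext (fun k => Cmod (p * z * (r * z) ^ k)%C)); [intros; rewrite Htail; reflexivity |].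
    apply ex_series_Cmod_scal_l, ex_series_Cmod_Cpow, H.
Qed.

Lemma Re_evalA2 (u : nat -> CC) (x : R) : Re (evalA2 u x) = PSeries (fun m => Re (u m)) x.
Proof. apply Series_ext. intros m. rewrite <- RtoC_pow. apply re_scal_r. Qed.

Lemma Im_evalA2 (u : nat -> CC) (x : R) : Im (evalA2 u x) = PSeries (fun m => Im (u m)) x.
Proof. apply Series_ext. intros m. rewrite <- RtoC_pow. apply im_scal_r. Qed.

Lemma evalA2_coef_unique (u v : nat -> CC) (r : R) :
  0 < r -> ex_series (fun m => Cmod (u m) * r ^ m) -> ex_series (fun m => Cmod (v m) * r ^ m) ->
  (forall x : R, Rabs x < r -> evalA2 u x = evalA2 v x) -> u = v.
Proof.
  intros Hr Hu Hv Huv.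
  assert (Hdisk : forall (pr : CC -> R) (w : nat -> CC), (forall z, Rabs (pr z) <= Cmod z) ->
            ex_series (fun m => Cmod (w m) * r ^ m) -> CV_disk (fun m => pr (w m)) r).
  { intros pr w Hpr Hw. unfold CV_disk.
    apply (ex_series_le (V := R_CompleteNormedModule)) with (b := fun m => Cmod (w m) * r ^ m);
      [intros m | exact Hw].
    change (norm ?x) with (Rabs x).
    rewrite Rabs_Rabsolu, Rabs_mult, (Rabs_right (r ^ m)) by (apply Rle_ge, pow_le; lra).
    apply Rmult_le_compat_r; [apply pow_le; lra | apply Hpr]. }
  assert (HRe : (fun m => Re (u m)) = (fun m => Re (v m))).
  { apply (PSeries_coef_unique _ _ r Hr); try apply Hdisk; try assumption; try apply re_le_Cmod.
    intros x Hx. rewrite <- !Re_evalA2, Huv by exact Hx. reflexivity. }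
  assert (HIm : (fun m => Im (u m)) = (fun m => Im (v m))).
  { apply (PSeries_coef_unique _ _ r Hr); try apply Hdisk; try assumption; try apply im_le_Cmod.
    intros x Hx. rewrite <- !Im_evalA2, Huv by exact Hx. reflexivity. }
  apply functional_extensionality. intros m.
  apply injective_projections; [exact (equal_f HRe m) | exact (equal_f HIm m)].
Qed.

(** * The space A^2_beta *)

Lemma wgt_S beta n :
  wgt beta (S n) = wgt beta n * (INR (S n) / (INR (S n) + 1 + beta)).
Proof. reflexivity. Qed.

Lemma wgt_bounds beta n : -1 < beta -> 0 < wgt beta n <= 1.
Proof.
  intros Hb. induction n as [| n IH]; [simpl; lra |].
  rewrite wgt_S.
  assert (Hn : 0 < INR (S n)) by (apply lt_0_INR; lia).
  assert (0 < INR (S n) / (INR (S n) + 1 + beta) <= 1).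
  { split; [apply Rdiv_lt_0_compat; lra |].
    apply Rlt_le, (Rdiv_lt_1 (INR (S n)) (INR (S n) + 1 + beta)); lra. }
  split; [apply Rmult_lt_0_compat |]; nra.
Qed.

Lemma ex_series_pow_div_wgt beta y :
  -1 < beta -> 0 < y < 1 -> ex_series (fun m => y ^ m / wgt beta m).
Proof.
  intros Hb Hy.
  assert (Hpos : forall m, 0 < y ^ m / wgt beta m).
  { intros m. apply Rdiv_lt_0_compat; [apply pow_lt; lra | apply wgt_bounds, Hb]. }
  apply (ex_series_ext (fun m => Rabs (y ^ m / wgt beta m))).
  { intros m. apply Rabs_right, Rle_ge, Rlt_le, Hpos. }
  apply (ex_series_DAlembert _ y); [lra | intros m; apply Rgt_not_eq, Hpos |].
  (* the ratio of consecutive terms is y (m + 2 + beta) / (m + 1) *)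
  apply (is_lim_seq_ext (fun m => y + y * (1 + beta) * / INR (S m))).
  - intros m. rewrite Rabs_right by (apply Rle_ge, Rlt_le, Rdiv_lt_0_compat; apply Hpos).
    rewrite wgt_S. pose proof (wgt_bounds beta m Hb).
    assert (0 < INR (S m)) by (apply lt_0_INR; lia).
    simpl pow. field. repeat split; try lra. apply Rgt_not_eq, pow_lt; lra.
  - replace (Finite y) with (Finite (y + y * (1 + beta) * 0)) by (f_equal; ring).
    apply is_lim_seq_plus'; [apply is_lim_seq_const |].
    apply is_lim_seq_mult'; [apply is_lim_seq_const |].
    replace (Finite 0) with (Rbar_inv p_infty) by reflexivity.
    apply (is_lim_seq_incr_1 (fun m => / INR m)), is_lim_seq_inv; [apply is_lim_seq_INR | discriminate].
Qed.

Definition sqnormA2 (beta : R) (f : nat -> CC) : R :=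
  Series (fun n => wgt beta n * Cmod (f n) ^ 2).

Lemma Cmod_wgt_mult_conj beta n (x y : CC) :
  -1 < beta -> Cmod (RtoC (wgt beta n) * x * Cconj y)%C = wgt beta n * Cmod x * Cmod y.
Proof.
  intros Hb. destruct (wgt_bounds beta n Hb).
  rewrite !Cmod_mult, Cmod_R, Cmod_conj, Rabs_right by lra. reflexivity.
Qed.

Lemma ex_series_ipA2_Cmod beta f g :
  -1 < beta -> inA2 beta f -> inA2 beta g ->
  ex_series (fun n => Cmod (RtoC (wgt beta n) * f n * Cconj (g n))%C).
Proof.
  intros Hb Hf Hg.
  apply (ex_series_le (V := R_CompleteNormedModule))
    with (b := fun n => / 2 * (wgt beta n * Cmod (f n) ^ 2 + wgt beta n * Cmod (g n) ^ 2)).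
  - intros n. change (norm ?x) with (Rabs x).
    rewrite Rabs_right by (apply Rle_ge, Cmod_ge_0). rewrite Cmod_wgt_mult_conj by exact Hb.
    destruct (wgt_bounds beta n Hb). pose proof (amgm 1 (Cmod (f n)) (Cmod (g n)) Rlt_0_1).
    assert (E : / 2 * (wgt beta n * Cmod (f n) ^ 2 + wgt beta n * Cmod (g n) ^ 2)
                = wgt beta n * ((1 * Cmod (f n) ^ 2 + Cmod (g n) ^ 2 / 1) / 2)) by field.
    rewrite E, Rmult_assoc. apply Rmult_le_compat_l; lra.
  - apply (ex_series_scal (V := R_NormedModule)), (ex_series_plus (V := R_NormedModule)); assumption.
Qed.

Lemma inA2_abs_conv beta u :
  -1 < beta -> inA2 beta u -> ex_series (fun m => Cmod (u m) * (/ 2) ^ m).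
Proof.
  intros Hb Hu.
  apply (ex_series_le (V := R_CompleteNormedModule))
    with (b := fun m => / 2 * (wgt beta m * Cmod (u m) ^ 2 + ((/ 2) ^ 2) ^ m / wgt beta m)).
  - intros m. change (norm ?x) with (Rabs x). destruct (wgt_bounds beta m Hb).
    rewrite Rabs_right by (apply Rle_ge, Rmult_le_pos; [apply Cmod_ge_0 | apply pow_le; lra]).
    rewrite <- pow_mult, Nat.mul_comm, pow_mult.
    pose proof (amgm (wgt beta m) (Cmod (u m)) ((/ 2) ^ m) ltac:(lra)). lra.
  - apply (ex_series_scal (V := R_NormedModule)), (ex_series_plus (V := R_NormedModule));
      [exact Hu | apply ex_series_pow_div_wgt; lra].
Qed.

Lemma Re_ipA2_diag beta f : Re (ipA2 beta f f) = sqnormA2 beta f.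
Proof.
  apply Series_ext. intros n.
  rewrite <- Cmult_assoc, <- Cmod2_conj, <- RtoC_mult. apply re_RtoC.
Qed.

Lemma sqnormA2_tail beta h :
  -1 < beta -> inA2 beta h ->
  ex_series (fun k => wgt beta (S k) * Cmod (h (S k)) ^ 2) /\
  Series (fun k => wgt beta (S k) * Cmod (h (S k)) ^ 2) <= sqnormA2 beta h.
Proof.
  intros Hb Hh.
  split; [apply (ex_series_incr_1 (V := R_NormedModule) (fun m => wgt beta m * Cmod (h m) ^ 2)), Hh |].
  unfold sqnormA2. rewrite (Series_incr_1 _ Hh).
  destruct (wgt_bounds beta 0 Hb). pose proof (pow2_ge_0 (Cmod (h 0%nat))). nra.
Qed.

Lemma sqnormA2_eq0 beta (h : nat -> CC) : (forall m, h m = 0%C) -> sqnormA2 beta h = 0.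
Proof.
  intros H. unfold sqnormA2. rewrite (Series_ext _ (fun _ => 0)) by (intros; rewrite H, Cmod_0; ring).
  apply Series_zero.
Qed.

Lemma inA2_eq0_of_wgt_Cmod_const beta h :
  -1 < beta -> inA2 beta h -> (forall m, wgt beta m * Cmod (h m) = Cmod (h 0%nat)) ->
  forall m, h m = 0%C.
Proof.
  intros Hb Hh Hconst.
  (* each term w_m |h_m|^2 = |h_0|^2 / w_m is at least |h_0|^2, yet the terms tend to 0 *)
  assert (Hle : forall m, Cmod (h 0%nat) ^ 2 <= wgt beta m * Cmod (h m) ^ 2).
  { intros m. rewrite <- (Hconst m). destruct (wgt_bounds beta m Hb).
    pose proof (pow2_ge_0 (Cmod (h m))).
    replace ((wgt beta m * Cmod (h m)) ^ 2) with (wgt beta m * (wgt beta m * Cmod (h m) ^ 2)) by ring.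
    nra. }
  pose proof (is_lim_seq_le _ _ _ _ Hle (is_lim_seq_const _) (ex_series_lim_0 _ Hh)) as H0.
  simpl in H0. assert (Hh0 : Cmod (h 0%nat) = 0) by (pose proof (Cmod_ge_0 (h 0%nat)); nra).
  intros m. apply Cmod_eq_0. specialize (Hconst m). rewrite Hh0 in Hconst.
  destruct (wgt_bounds beta m Hb). pose proof (Cmod_ge_0 (h m)). nra.
Qed.

Lemma geo_tail_sq_summable (p r : CC) (K : R) :
  0 <= K -> Cmod r <= 1 -> Cmod p <= K * (1 - Cmod r) ->
  ex_series (fun k => Cmod (p * r ^ k)%C ^ 2) /\
  Series (fun k => Cmod (p * r ^ k)%C ^ 2) <= K * Cmod p.
Proof.
  intros HK Hr Hp. pose proof (Cmod_ge_0 p). pose proof (Cmod_ge_0 r).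
  assert (E : forall k, Cmod (p * r ^ k)%C ^ 2 = Cmod p ^ 2 * (Cmod r ^ 2) ^ k).
  { intros k. rewrite Cmod_mult, Cmod_pow, Rpow_mult_distr, <- !pow_mult, Nat.mul_comm. reflexivity. }
  enough (ex_series (fun k => Cmod p ^ 2 * (Cmod r ^ 2) ^ k) /\
          Series (fun k => Cmod p ^ 2 * (Cmod r ^ 2) ^ k) <= K * Cmod p) as [Hex HS].
  { split; [exact (ex_series_ext _ _ (fun k => eq_sym (E k)) Hex) | rewrite (Series_ext _ _ E); exact HS]. }
  destruct (Req_dec (Cmod r) 1) as [Hr1 | Hr1].
  - (* a unimodular ratio forces p = 0 *)
    assert (Hp0 : Cmod p = 0) by (rewrite Hr1 in Hp; lra).
    assert (E0 : forall k, Cmod p ^ 2 * (Cmod r ^ 2) ^ k = 0 * (/ 2) ^ k) by (intros; rewrite Hp0; ring).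
    rewrite (Series_ext _ _ E0), Series_scal_l.
    split; [| rewrite Hp0, !Rmult_0_l, Rmult_0_r; apply Rle_refl].
    apply (ex_series_ext _ _ (fun k => eq_sym (E0 k))), (ex_series_scal (V := R_NormedModule)).
    apply ex_series_geom.
    rewrite Rabs_right; lra.
  - assert (Hq : Rabs (Cmod r ^ 2) < 1) by (rewrite Rabs_right by (apply Rle_ge, pow2_ge_0); simpl; nra).
    split; [apply (ex_series_scal (V := R_NormedModule)), ex_series_geom, Hq |].
    rewrite Series_scal_l, Series_geom by exact Hq.
    assert (Hd : 1 - Cmod r <= 1 - Cmod r ^ 2) by (simpl; nra).
    apply (Rmult_le_reg_r (1 - Cmod r ^ 2)); [simpl; nra |].
    rewrite Rmult_assoc, Rinv_l by (apply Rgt_not_eq; simpl; nra).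
    assert (0 <= K * Cmod p) by (apply Rmult_le_pos; assumption). nra.
Qed.

Lemma geo_tail_inA2 beta (c0 p r : CC) (K : R) :
  -1 < beta -> 0 <= K -> Cmod r <= 1 -> Cmod p <= K * (1 - Cmod r) ->
  inA2 beta (geo_tail c0 p r).
Proof.
  intros Hb HK Hr Hp. unfold inA2.
  apply (ex_series_incr_1 (V := R_NormedModule)). simpl geo_tail.
  apply (ex_series_le (V := R_CompleteNormedModule))
    with (b := fun k => Cmod (p * r ^ k)%C ^ 2); [| apply (geo_tail_sq_summable p r K); assumption].
  intros k. change (norm ?x) with (Rabs x). destruct (wgt_bounds beta (S k) Hb).
  pose proof (pow2_ge_0 (Cmod (p * r ^ k)%C)).
  rewrite Rabs_right by (apply Rle_ge, Rmult_le_pos; lra). nra.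
Qed.

Lemma sqnormA2_one beta : -1 < beta -> sqnormA2 beta (geo_tail 1 0 0) = 1.
Proof.
  intros Hb. unfold sqnormA2.
  rewrite Series_incr_1 by (apply (geo_tail_inA2 beta _ _ _ 0); rewrite ?Cmod_0; lra).
  rewrite (Series_ext _ (fun _ => 0)) by (intros; simpl; rewrite Cmult_0_l, Cmod_0; ring).
  rewrite Series_zero. simpl. rewrite Cmod_1. ring.
Qed.

Lemma wgt_mult_le_amgm beta n (x y eps : R) :
  -1 < beta -> 0 < eps ->
  wgt beta n * x * y <= / 2 * (eps * x ^ 2 + / eps * (wgt beta n * y ^ 2)).
Proof.
  intros Hb Heps. destruct (wgt_bounds beta n Hb) as [Hw0 Hw1].
  pose proof (amgm eps x (wgt beta n * y) Heps).
  (* w^2 y^2 <= w y^2 since w <= 1 *)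
  assert (0 <= wgt beta n * (y ^ 2 / eps))
    by (apply Rmult_le_pos, Rdiv_le_0_compat; [lra | apply pow2_ge_0 | lra]).
  replace ((wgt beta n * y) ^ 2 / eps) with (wgt beta n * (wgt beta n * (y ^ 2 / eps))) in H
    by (field; lra).
  unfold Rdiv in *. nra.
Qed.

Lemma ipA2_geo_tail_le beta (h : nat -> CC) (c0 p r : CC) (K eps : R) :
  -1 < beta -> inA2 beta h -> 0 <= K -> Cmod r <= 1 -> Cmod p <= K * (1 - Cmod r) -> 0 < eps ->
  Cmod (ipA2 beta (geo_tail c0 p r) h - c0 * Cconj (h 0%nat))%C
  <= (eps * (K * Cmod p) + sqnormA2 beta h / eps) / 2.
Proof.
  intros Hb Hh HK Hr Hp Heps.
  set (g := geo_tail c0 p r).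
  assert (Hg : inA2 beta g) by (apply (geo_tail_inA2 beta c0 p r K); assumption).
  pose proof (ex_series_ipA2_Cmod beta g h Hb Hg Hh) as Habs.
  pose proof (proj1 (ex_series_incr_1 (V := R_NormedModule) _) Habs) as Habs1. simpl in Habs1.
  destruct (geo_tail_sq_summable p r K HK Hr Hp) as [Hgex Hgle].
  destruct (sqnormA2_tail beta h Hb Hh) as [Hhex Hhle].
  unfold ipA2. rewrite csum_shift by exact Habs.
  replace (RtoC (wgt beta 0) * g 0%nat * Cconj (h 0%nat) + csum _ - c0 * Cconj (h 0%nat))%C
    with (csum (fun k => RtoC (wgt beta (S k)) * g (S k) * Cconj (h (S k)))%C) by (simpl; ring).
  eapply Rle_trans; [apply Cmod_csum_le, Habs1 |].
  apply Rle_trans with (Series (fun k => / 2 * (eps * Cmod (p * r ^ k)%C ^ 2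
                                               + / eps * (wgt beta (S k) * Cmod (h (S k)) ^ 2)))).
  - apply Series_le_compat; [| exact Habs1 |].
    + intros k. rewrite Cmod_wgt_mult_conj by exact Hb.
      apply wgt_mult_le_amgm; assumption.
    + apply (ex_series_scal (V := R_NormedModule)), (ex_series_plus (V := R_NormedModule));
        apply (ex_series_scal (V := R_NormedModule)); assumption.
  - rewrite Series_scal_l, Series_plus, !Series_scal_l;
      try apply (ex_series_scal (V := R_NormedModule)); try assumption.
    apply (Rmult_le_compat_l eps) in Hgle; [| lra].
    apply (Rmult_le_compat_l (/ eps)) in Hhle; [| apply Rlt_le, Rinv_0_lt_compat, Heps].
    unfold Rdiv. lra.
Qed.

Lemma ipA2_iter_adjoint_fixed beta T S (h : nat -> CC) :
  is_adjoint beta T S -> (forall f, inA2 beta f -> inA2 beta (T f)) -> inA2 beta h -> S h = h ->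
  forall n f, inA2 beta f -> ipA2 beta (Nat.iter n T f) h = ipA2 beta f h.
Proof.
  intros [_ Hadj] HT Hh HSh n f Hf.
  assert (Hin : forall n, inA2 beta (Nat.iter n T f))
    by (intros k; induction k; [exact Hf | apply HT; assumption]).
  induction n as [| n IH]; [reflexivity |].
  simpl. rewrite Hadj, HSh; [exact IH | apply Hin | exact Hh].
Qed.

(** * Linear fractional maps *)

Definition pole_free (C D : CC) : Prop := forall z, Cmod z < 1 -> (C * z + D)%C <> 0%C.

Definition lft_deriv0 (A B C D : CC) : CC := ((A * D - B * C) / (D * D))%C.

Definition lft_ratio (C D : CC) : CC := (- C / D)%C.

(* lft A B C D z = B/D + lft_deriv0 * z / (1 - lft_ratio * z) *)
Definition lft_coef (A B C D : CC) : nat -> CC :=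
  geo_tail (B / D) (lft_deriv0 A B C D) (lft_ratio C D).

Lemma pole_free_den C D : pole_free C D -> D <> 0%C.
Proof.
  intros H E. apply (H 0%C); [rewrite Cmod_0; lra |]. rewrite E. ring.
Qed.

Lemma Cmod_lft_ratio_le_1 C D : pole_free C D -> Cmod (lft_ratio C D) <= 1.
Proof.
  intros H. pose proof (pole_free_den C D H) as HD.
  destruct (Rle_lt_dec (Cmod (lft_ratio C D)) 1) as [| Hr]; [assumption | exfalso].
  assert (HC : C <> 0%C).
  { intros E. unfold lft_ratio in Hr. rewrite E in Hr.
    replace (- 0 / D)%C with (RtoC 0) in Hr by (field; exact HD). rewrite Cmod_0 in Hr. lra. }
  (* otherwise the pole / lft_ratio C D lies in the disc *)
  apply (H (/ lft_ratio C D)%C).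
  - rewrite Cmod_inv by (intros E; rewrite E, Cmod_0 in Hr; lra).
    rewrite <- Rinv_1. apply Rinv_lt_contravar; lra.
  - unfold lft_ratio. field. split; assumption.
Qed.

Lemma lft_0 (A B C D : CC) : D <> 0%C -> lft A B C D 0 = (B / D)%C.
Proof. intros HD. unfold lft. f_equal; ring. Qed.

Lemma lft_expand (A B C D z : CC) :
  D <> 0%C -> (C * z + D)%C <> 0%C ->
  (1 - lft_ratio C D * z)%C <> 0%C /\
  lft A B C D z = (B / D + lft_deriv0 A B C D * z / (1 - lft_ratio C D * z))%C.
Proof.
  intros HD Hz.
  assert (E : (1 - lft_ratio C D * z)%C = ((C * z + D) / D)%C) by (unfold lft_ratio; field; exact HD).
  split.
  - rewrite E. intros E0. apply Hz.
    replace (C * z + D)%C with ((C * z + D) / D * D)%C by (field; exact HD). rewrite E0. ring.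
  - rewrite E. unfold lft, lft_deriv0. field. split; assumption.
Qed.

Lemma evalA2_lft_coef (A B C D z : CC) :
  pole_free C D -> Cmod z < 1 -> evalA2 (lft_coef A B C D) z = lft A B C D z.
Proof.
  intros H Hz. pose proof (pole_free_den C D H) as HD.
  unfold lft_coef. rewrite evalA2_geo_tail.
  - symmetry. apply lft_expand; [exact HD | apply H, Hz].
  - rewrite Cmod_mult. pose proof (Cmod_lft_ratio_le_1 C D H). pose proof (Cmod_ge_0 z).
    pose proof (Cmod_ge_0 (lft_ratio C D)). nra.
Qed.

Lemma exists_Cmod_mult_real (r : CC) (t : R) :
  0 <= t -> exists z, Cmod z = t /\ (r * z)%C = RtoC (t * Cmod r).
Proof.
  intros Ht. destruct (Req_dec (Cmod r) 0) as [Hr | Hr].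
  - exists (RtoC t). rewrite Cmod_R, Rabs_right by lra. split; [reflexivity |].
    rewrite Hr, (Cmod_eq_0 r Hr). apply injective_projections; simpl; ring.
  - exists (RtoC (t / Cmod r) * Cconj r)%C. split.
    + rewrite Cmod_mult, Cmod_R, Cmod_conj, Rabs_right.
      * field. exact Hr.
      * apply Rle_ge, Rdiv_le_0_compat; [lra | pose proof (Cmod_ge_0 r); lra].
    + rewrite Cmult_comm, <- Cmult_assoc, (Cmult_comm (Cconj r)), <- Cmod2_conj, <- RtoC_mult.
      f_equal. field. exact Hr.
Qed.

Lemma Cmod_lft_deriv0_le (A B C D : CC) (M : R) :
  pole_free C D -> (forall z, Cmod z < 1 -> Cmod (lft A B C D z) <= M) ->
  Cmod (lft_deriv0 A B C D) <= 2 * M * (1 - Cmod (lft_ratio C D)).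
Proof.
  intros H HM. pose proof (pole_free_den C D H) as HD.
  set (p := lft_deriv0 A B C D). set (r := lft_ratio C D).
  assert (Hr : Cmod r <= 1) by apply Cmod_lft_ratio_le_1, H.
  pose proof (Cmod_ge_0 r).
  assert (HM0 : Cmod (lft A B C D 0) <= M) by (apply HM; rewrite Cmod_0; lra).
  pose proof (Cmod_ge_0 (lft A B C D 0)).
  enough (Cmod p + 2 * M * Cmod r <= 2 * M) by lra.
  apply le_of_forall_scale_lt_1; [lra |]. intros t Ht.
  (* on the radius where r z = t |r|, the difference F z - F 0 has modulus t |p| / (1 - t |r|) *)
  destruct (exists_Cmod_mult_real r t (proj1 Ht)) as [z [Hzt Hrz]].
  assert (Hz : Cmod z < 1) by lra.
  destruct (lft_expand A B C D z HD (H z Hz)) as [Hden E]. fold p r in Hden, E.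
  rewrite Hrz in Hden, E.
  assert (Hpos : 0 < 1 - t * Cmod r) by nra.
  assert (Hdiff : Cmod (lft A B C D z - lft A B C D 0)%C <= 2 * M).
  { unfold Cminus. eapply Rle_trans; [apply Cmod_triangle |]. rewrite Cmod_opp.
    specialize (HM z Hz). lra. }
  rewrite E, lft_0 in Hdiff by exact HD.
  replace (B / D + p * z / (1 - RtoC (t * Cmod r)) - B / D)%C
    with (p * z / RtoC (1 - t * Cmod r))%C in Hdiff by (rewrite RtoC_minus; ring).
  rewrite Cmod_div, Cmod_mult, Cmod_R, Rabs_right, Hzt in Hdiff
    by (lra || (intros E0; apply RtoC_inj in E0; lra)).
  apply (Rmult_le_compat_r (1 - t * Cmod r)) in Hdiff; [| lra].
  unfold Rdiv in Hdiff. rewrite Rmult_assoc, Rinv_l in Hdiff by lra. lra.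
Qed.

Lemma Cmod_lft_deriv0_le_diff (A B C D : CC) :
  pole_free C D ->
  Cmod (lft_deriv0 A B C D) <= 3 * Cmod (lft A B C D (RtoC (/ 2)) - lft A B C D 0)%C.
Proof.
  intros H. pose proof (pole_free_den C D H) as HD.
  assert (Hz : Cmod (RtoC (/ 2)) < 1) by (rewrite Cmod_R, Rabs_right; lra).
  destruct (lft_expand A B C D _ HD (H _ Hz)) as [Hden E].
  rewrite E, lft_0 by exact HD.
  replace (B / D + lft_deriv0 A B C D * RtoC (/ 2) / (1 - lft_ratio C D * RtoC (/ 2)) - B / D)%C
    with (lft_deriv0 A B C D * RtoC (/ 2) / (1 - lft_ratio C D * RtoC (/ 2)))%C by ring.
  rewrite Cmod_div, Cmod_mult, Cmod_R, Rabs_right by (lra || exact Hden).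
  assert (Hr := Cmod_lft_ratio_le_1 C D H).
  assert (Hd : Cmod (1 - lft_ratio C D * RtoC (/ 2))%C <= 3 / 2).
  { unfold Cminus. eapply Rle_trans; [apply Cmod_triangle |].
    rewrite Cmod_1, Cmod_opp, Cmod_mult, Cmod_R, Rabs_right; lra. }
  assert (Hd0 : 0 < Cmod (1 - lft_ratio C D * RtoC (/ 2))%C) by (apply Cmod_gt_0, Hden).
  pose proof (Cmod_ge_0 (lft_deriv0 A B C D)).
  apply (Rmult_le_reg_r (Cmod (1 - lft_ratio C D * RtoC (/ 2))%C)); [exact Hd0 |].
  unfold Rdiv. rewrite !Rmult_assoc, Rinv_l by lra. nra.
Qed.

Lemma lft_coef_inA2 beta (A B C D : CC) (M : R) :
  -1 < beta -> pole_free C D -> (forall z, Cmod z < 1 -> Cmod (lft A B C D z) <= M) ->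
  inA2 beta (lft_coef A B C D).
Proof.
  intros Hb H HM.
  assert (HM0 : 0 <= M) by (eapply Rle_trans; [apply Cmod_ge_0 | apply (HM 0%C); rewrite Cmod_0; lra]).
  apply (geo_tail_inA2 beta _ _ _ (2 * M)); [exact Hb | lra | apply Cmod_lft_ratio_le_1, H |].
  apply (Cmod_lft_deriv0_le _ _ _ _ M H HM).
Qed.

Lemma ipA2_lft_coef_le beta (h : nat -> CC) (A B C D c0 : CC) (K eps delta : R) :
  -1 < beta -> inA2 beta h -> 0 <= K -> 0 < eps -> pole_free C D ->
  Cmod (lft_deriv0 A B C D) <= K * (1 - Cmod (lft_ratio C D)) ->
  Cmod (lft A B C D 0 - c0)%C <= delta -> Cmod (lft A B C D (RtoC (/ 2)) - c0)%C <= delta ->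
  Cmod (ipA2 beta (lft_coef A B C D) h - c0 * Cconj (h 0%nat))%C
  <= (eps * (K * (6 * delta)) + sqnormA2 beta h / eps) / 2 + delta * Cmod (h 0%nat).
Proof.
  intros Hb Hh HK Heps H Hp H0 Hhalf. pose proof (pole_free_den C D H) as HD.
  assert (Hpd : Cmod (lft_deriv0 A B C D) <= 6 * delta).
  { eapply Rle_trans; [apply Cmod_lft_deriv0_le_diff, H |].
    replace (lft A B C D (RtoC (/ 2)) - lft A B C D 0)%C
      with ((lft A B C D (RtoC (/ 2)) - c0) + - (lft A B C D 0 - c0))%C by ring.
    pose proof (Cmod_triangle (lft A B C D (RtoC (/ 2)) - c0)%C (- (lft A B C D 0 - c0))%C).
    rewrite Cmod_opp in H1. lra. }
  pose proof (ipA2_geo_tail_le beta h (B / D) _ _ K eps Hb Hh HK (Cmod_lft_ratio_le_1 C D H) Hp Heps)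
    as Hip.
  fold (lft_coef A B C D) in Hip.
  rewrite lft_0 in H0 by exact HD.
  replace (ipA2 beta (lft_coef A B C D) h - c0 * Cconj (h 0%nat))%C
    with ((ipA2 beta (lft_coef A B C D) h - B / D * Cconj (h 0%nat)) + (B / D - c0) * Cconj (h 0%nat))%C
    by ring.
  eapply Rle_trans; [apply Cmod_triangle |]. rewrite Cmod_mult, Cmod_conj.
  apply Rplus_le_compat.
  - eapply Rle_trans; [exact Hip |]. apply Rmult_le_compat_r; [lra |]. apply Rplus_le_compat_r.
    apply Rmult_le_compat_l; [lra |]. apply Rmult_le_compat_l; assumption.
  - apply Rmult_le_compat_r; [apply Cmod_ge_0 | exact H0].
Qed.

Lemma ipA2_lft_coef_close beta (h : nat -> CC) (K : R) (c0 : CC) (eta : R) :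
  -1 < beta -> inA2 beta h -> 0 <= K -> 0 < eta ->
  exists delta, 0 < delta /\
  forall A B C D : CC, pole_free C D ->
    Cmod (lft_deriv0 A B C D) <= K * (1 - Cmod (lft_ratio C D)) ->
    Cmod (lft A B C D 0 - c0)%C < delta -> Cmod (lft A B C D (RtoC (/ 2)) - c0)%C < delta ->
    Cmod (ipA2 beta (lft_coef A B C D) h - c0 * Cconj (h 0%nat))%C < eta.
Proof.
  intros Hb Hh HK Heta.
  set (N := sqnormA2 beta h).
  assert (HN : 0 <= N) by (apply Series_nonneg; [intros n; apply Rmult_le_pos;
    [apply Rlt_le, wgt_bounds, Hb | apply pow2_ge_0] | exact Hh]).
  pose proof (Cmod_ge_0 (h 0%nat)) as Hh0. set (h0 := Cmod (h 0%nat)) in *.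
  set (eps := 2 * (N + 1) / eta).
  assert (Heps : 0 < eps) by (apply Rdiv_lt_0_compat; lra).
  set (Z := 3 * eps * K + h0 + 1).
  assert (HZ : 0 < Z) by (pose proof (Rmult_le_pos _ _ (Rlt_le _ _ Heps) HK); unfold Z; lra).
  set (delta := eta / (4 * Z)).
  exists delta. split; [apply Rdiv_lt_0_compat; lra |].
  intros A B C D H Hp H0 Hhalf.
  eapply Rle_lt_trans; [apply (ipA2_lft_coef_le beta h A B C D c0 K eps delta); auto; lra |].
  fold N h0.
  (* eps and delta are chosen so that both error terms are below eta / 4 *)
  assert (HNeps : N / eps / 2 < eta / 4).
  { unfold eps. replace (N / (2 * (N + 1) / eta) / 2) with (N / (N + 1) * (eta / 4)) by (field; lra).
    rewrite <- (Rmult_1_l (eta / 4)) at 2. apply Rmult_lt_compat_r; [lra |].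
    apply (Rdiv_lt_1 N (N + 1)); lra. }
  assert (Hdelta : (3 * eps * K + h0) * delta < eta / 4).
  { unfold delta. replace ((3 * eps * K + h0) * (eta / (4 * Z))) with ((3 * eps * K + h0) / Z * (eta / 4))
      by (field; lra).
    rewrite <- (Rmult_1_l (eta / 4)) at 2. apply Rmult_lt_compat_r; [lra |].
    apply (Rdiv_lt_1 (3 * eps * K + h0) Z); [lra | unfold Z; lra]. }
  lra.
Qed.

Lemma lft_comp (A B C D a b c d z : CC) :
  (c * z + d)%C <> 0%C -> (C * lft a b c d z + D)%C <> 0%C ->
  ((C * a + D * c) * z + (C * b + D * d))%C <> 0%C /\
  lft (A * a + B * c) (A * b + B * d) (C * a + D * c) (C * b + D * d) z = lft A B C D (lft a b c d z).
Proof.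
  intros Hz Hphi.
  assert (E : ((C * a + D * c) * z + (C * b + D * d))%C = ((C * lft a b c d z + D) * (c * z + d))%C)
    by (unfold lft; field; exact Hz).
  split; [rewrite E; apply Cmult_neq_0; assumption |].
  unfold lft at 1 3. rewrite E. unfold lft. field. split; [exact Hz |].
  intros E0. apply Hphi. unfold lft. rewrite <- (Cmult_0_l (/ (c * z + d))%C), <- E0. field. exact Hz.
Qed.

Lemma cauchy_den_ge (v z : CC) :
  Cmod v < 1 -> Cmod z <= 1 -> 1 - Cmod v <= Cmod (1 - v * z)%C /\ (1 - v * z)%C <> 0%C.
Proof.
  intros Hv Hz.
  assert (H : 1 - Cmod v <= Cmod (1 - v * z)%C).
  { pose proof (Cmod_triangle (1 - v * z)%C (v * z)%C) as Ht.
    replace (1 - v * z + v * z)%C with (RtoC 1) in Ht by ring.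
    rewrite Cmod_1, Cmod_mult in Ht. pose proof (Cmod_ge_0 v). pose proof (Cmod_ge_0 z). nra. }
  split; [exact H |]. intros E. rewrite E, Cmod_0 in H. lra.
Qed.

Lemma Cmod_cauchy_le (v z : CC) :
  Cmod v < 1 -> Cmod z <= 1 -> Cmod (/ (1 - v * z))%C <= / (1 - Cmod v).
Proof.
  intros Hv Hz. destruct (cauchy_den_ge v z Hv Hz) as [Hge Hne].
  rewrite Cmod_inv by exact Hne. apply Rinv_le_contravar; lra.
Qed.

Lemma cauchy_lipschitz (v x y : CC) :
  Cmod v < 1 -> Cmod x <= 1 -> Cmod y <= 1 ->
  Cmod (/ (1 - v * x) - / (1 - v * y))%C <= Cmod (x - y)%C / (1 - Cmod v) ^ 2.
Proof.
  intros Hv Hx Hy.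
  destruct (cauchy_den_ge v x Hv Hx) as [Hgx Hnx]. destruct (cauchy_den_ge v y Hv Hy) as [Hgy Hny].
  replace (/ (1 - v * x) - / (1 - v * y))%C with (v * (x - y) / ((1 - v * x) * (1 - v * y)))%C
    by (field; split; assumption).
  rewrite Cmod_div by (apply Cmult_neq_0; assumption). rewrite !Cmod_mult.
  pose proof (Cmod_ge_0 v). pose proof (Cmod_ge_0 (x - y)%C).
  assert (Hden : (1 - Cmod v) ^ 2 <= Cmod (1 - v * x)%C * Cmod (1 - v * y)%C)
    by (simpl; rewrite Rmult_1_r; apply Rmult_le_compat; lra).
  assert (0 < (1 - Cmod v) ^ 2) by (apply pow_lt; lra).
  unfold Rdiv. apply Rle_trans with (Cmod v * Cmod (x - y)%C * / (1 - Cmod v) ^ 2).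
  - apply Rmult_le_compat_l; [apply Rmult_le_pos; assumption | apply Rinv_le_contravar; assumption].
  - apply Rmult_le_compat_r; [apply Rlt_le, Rinv_0_lt_compat; assumption | nra].
Qed.

Lemma pole_free_cauchy (v : CC) : Cmod v < 1 -> pole_free (- v) 1.
Proof.
  intros Hv z Hz. replace (- v * z + 1)%C with (1 - v * z)%C by ring.
  apply cauchy_den_ge; lra.
Qed.

Lemma lft_cauchy (v z : CC) : (1 - v * z)%C <> 0%C -> lft 0 1 (- v) 1 z = (/ (1 - v * z))%C.
Proof. intros H. unfold lft. field. exact H. Qed.

Lemma lft_coef_cauchy (v : CC) m : lft_coef 0 1 (- v) 1 m = (v ^ m)%C.
Proof.
  unfold lft_coef. destruct m as [| k]; simpl geo_tail.
  - simpl. field.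
  - replace (lft_deriv0 0 1 (- v) 1) with v by (unfold lft_deriv0; field).
    replace (lft_ratio (- v) 1) with v by (unfold lft_ratio; field).
    reflexivity.
Qed.

(** * Composition operators *)

Lemma eq_of_Cmod_sub_lt (x y : CC) : (forall eta, 0 < eta -> Cmod (x - y)%C < eta) -> x = y.
Proof.
  intros H. apply Ceq_minus, Cmod_eq_0.
  destruct (Req_dec (Cmod (x - y)%C) 0) as [| Hne]; [assumption |].
  specialize (H (Cmod (x - y)%C)). pose proof (Cmod_ge_0 (x - y)%C). lra.
Qed.

Section CompositionOperator.

Variables (beta : R) (a b c d : CC) (T : (nat -> CC) -> nat -> CC).
Hypothesis beta_gt : -1 < beta.
Hypothesis phi_selfmap :
  forall z, Cmod z < 1 -> (c * z + d)%C <> 0%C /\ Cmod (lft a b c d z) < 1.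
Hypothesis T_comp :
  forall f, inA2 beta f ->
    inA2 beta (T f) /\ forall z, Cmod z < 1 -> evalA2 (T f) z = evalA2 f (lft a b c d z).

Local Notation phi := (lft a b c d).

Lemma iter_phi_in_disc n z : Cmod z < 1 -> Cmod (Nat.iter n phi z) < 1.
Proof. intros Hz. induction n as [| n IH]; [exact Hz | apply phi_selfmap, IH]. Qed.

Lemma comp_op_eq f g :
  inA2 beta f -> inA2 beta g -> (forall z, Cmod z < 1 -> evalA2 g z = evalA2 f (phi z)) -> T f = g.
Proof.
  intros Hf Hg Hfg. destruct (T_comp f Hf) as [HTf HTe].
  apply (evalA2_coef_unique _ _ (/ 2)); [lra | apply (inA2_abs_conv beta); assumption.. |].
  intros x Hx. assert (Hx1 : Cmod (RtoC x) < 1) by (rewrite Cmod_R; lra).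
  rewrite HTe, Hfg by exact Hx1. reflexivity.
Qed.

Lemma comp_op_one : T (geo_tail 1 0 0) = geo_tail 1 0 0.
Proof.
  assert (Hone : inA2 beta (geo_tail 1 0 0)) by (apply (geo_tail_inA2 _ _ _ _ 0); rewrite ?Cmod_0; lra).
  assert (Heval : forall z, evalA2 (geo_tail 1 0 0) z = RtoC 1).
  { intros z. rewrite evalA2_geo_tail by (rewrite Cmult_0_l, Cmod_0; lra). field. }
  apply comp_op_eq; [exact Hone | exact Hone |]. intros z _. rewrite !Heval. reflexivity.
Qed.

Lemma lft_comp_phi (A B C D : CC) :
  pole_free C D ->
  pole_free (C * a + D * c) (C * b + D * d) /\
  forall z, Cmod z < 1 ->
    lft (A * a + B * c) (A * b + B * d) (C * a + D * c) (C * b + D * d) z = lft A B C D (phi z).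
Proof.
  intros H. split; intros z Hz; destruct (phi_selfmap z Hz) as [Hden Hin];
    apply (lft_comp A B C D a b c d z Hden (H _ Hin)).
Qed.

Lemma comp_op_lft_coef (A B C D : CC) (M : R) :
  pole_free C D -> (forall z, Cmod z < 1 -> Cmod (lft A B C D z) <= M) ->
  T (lft_coef A B C D)
  = lft_coef (A * a + B * c) (A * b + B * d) (C * a + D * c) (C * b + D * d).
Proof.
  intros H HM. destruct (lft_comp_phi A B C D H) as [H' Hcomp].
  apply comp_op_eq.
  - apply (lft_coef_inA2 beta A B C D M beta_gt H HM).
  - apply (lft_coef_inA2 beta _ _ _ _ M beta_gt H'). intros z Hz. rewrite Hcomp by exact Hz.
    apply HM, phi_selfmap, Hz.
  - intros z Hz. rewrite !evalA2_lft_coef by (assumption || apply phi_selfmap, Hz).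
    apply Hcomp, Hz.
Qed.

Lemma comp_op_iter_cauchy (v : CC) n :
  Cmod v < 1 ->
  exists A B C D, pole_free C D /\
    Nat.iter n T (lft_coef 0 1 (- v) 1) = lft_coef A B C D /\
    forall z, Cmod z < 1 -> lft A B C D z = (/ (1 - v * Nat.iter n phi z))%C.
Proof.
  intros Hv. induction n as [| n (A & B & C & D & H & Hiter & Hlft)].
  - exists 0%C, 1%C, (- v)%C, 1%C. split; [apply pole_free_cauchy, Hv |]. split; [reflexivity |].
    intros z Hz. apply lft_cauchy, (cauchy_den_ge v z Hv); lra.
  - destruct (lft_comp_phi A B C D H) as [H' Hcomp].
    do 4 eexists. split; [exact H' |]. split.
    + simpl Nat.iter. rewrite Hiter. apply (comp_op_lft_coef A B C D (/ (1 - Cmod v)) H).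
      intros z Hz. rewrite Hlft by exact Hz. apply Cmod_cauchy_le; [exact Hv |].
      apply Rlt_le, iter_phi_in_disc, Hz.
    + intros z Hz. rewrite Hcomp, Hlft by (assumption || apply phi_selfmap, Hz).
      rewrite Nat.iter_swap. reflexivity.
Qed.

Section InvariantVector.

Variables (h : nat -> CC) (w : CC).
Hypothesis h_in : inA2 beta h.
Hypothesis h_invariant :
  forall n f, inA2 beta f -> ipA2 beta (Nat.iter n T f) h = ipA2 beta f h.
Hypothesis w_le_1 : Cmod w <= 1.
Hypothesis w_attracts : attracts phi w.

Lemma ipA2_cauchy_kernel (v : CC) :
  Cmod v < 1 -> ipA2 beta (lft_coef 0 1 (- v) 1) h = (/ (1 - v * w) * Cconj (h 0%nat))%C.
Proof.
  intros Hv. apply eq_of_Cmod_sub_lt. intros eta Heta.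
  set (M := / (1 - Cmod v)).
  assert (HM : 0 < M) by (apply Rinv_0_lt_compat; lra).
  destruct (ipA2_lft_coef_close beta h (2 * M) (/ (1 - v * w)) eta beta_gt h_in ltac:(lra) Heta)
    as [delta [Hdelta Hclose]].
  assert (Hrate : 0 < delta * (1 - Cmod v) ^ 2) by (apply Rmult_lt_0_compat; [| apply pow_lt]; lra).
  destruct (w_attracts (/ 2) _ ltac:(lra) Hrate) as [N HN].
  destruct (comp_op_iter_cauchy v N Hv) as (A & B & C & D & H & Hiter & Hlft).
  assert (Hnear : forall z, Cmod z <= / 2 -> Cmod (lft A B C D z - / (1 - v * w))%C < delta).
  { intros z Hz. rewrite Hlft by lra.
    eapply Rle_lt_trans;
      [apply cauchy_lipschitz; [exact Hv | apply Rlt_le, iter_phi_in_disc; lra | exact w_le_1] |].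
    apply (Rmult_lt_reg_r ((1 - Cmod v) ^ 2)); [apply pow_lt; lra |].
    unfold Rdiv. rewrite Rmult_assoc, Rinv_l by (apply Rgt_not_eq, pow_lt; lra).
    rewrite Rmult_1_r. apply HN; [lia | exact Hz]. }
  assert (Hkernel : inA2 beta (lft_coef 0 1 (- v) 1)).
  { apply (lft_coef_inA2 beta _ _ _ _ M beta_gt (pole_free_cauchy v Hv)).
    intros z Hz. rewrite lft_cauchy by (apply (cauchy_den_ge v z Hv); lra).
    apply Cmod_cauchy_le; lra. }
  rewrite <- (h_invariant N _ Hkernel), Hiter.
  apply Hclose; [exact H | | apply Hnear; rewrite Cmod_0; lra |
                 apply Hnear; rewrite Cmod_R, Rabs_right; lra].
  apply Cmod_lft_deriv0_le; [exact H |]. intros z Hz. rewrite Hlft by exact Hz.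
  apply Cmod_cauchy_le; [exact Hv | apply Rlt_le, iter_phi_in_disc, Hz].
Qed.

End InvariantVector.

End CompositionOperator.

Lemma inA2_eq0_of_ipA2_cauchy beta (h : nat -> CC) (w : CC) :
  -1 < beta -> inA2 beta h -> Cmod w = 1 ->
  (forall x : R, -1 < x < 1 ->
     ipA2 beta (lft_coef 0 1 (- RtoC x) 1) h = (/ (1 - x * w) * Cconj (h 0%nat))%C) ->
  forall m, h m = 0%C.
Proof.
  intros Hb Hh Hw Hid.
  assert (Hcoef : (fun m => RtoC (wgt beta m) * Cconj (h m))%C = (fun m => Cconj (h 0%nat) * w ^ m)%C).
  { apply (evalA2_coef_unique _ _ (/ 2)); [lra | | |].
    - apply (ex_series_le (V := R_CompleteNormedModule))
        with (b := fun m => Cmod (h m) * (/ 2) ^ m); [| apply (inA2_abs_conv beta); assumption].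
      intros m. change (norm ?x) with (Rabs x). destruct (wgt_bounds beta m Hb).
      rewrite Rabs_right by (apply Rle_ge, Rmult_le_pos; [apply Cmod_ge_0 | apply pow_le; lra]).
      rewrite Cmod_mult, Cmod_R, Cmod_conj, Rabs_right by lra.
      assert (0 <= Cmod (h m) * (/ 2) ^ m) by (apply Rmult_le_pos; [apply Cmod_ge_0 | apply pow_le; lra]).
      nra.
    - apply (ex_series_ext (fun m => Cmod (h 0%nat) * (/ 2) ^ m)).
      + intros m. rewrite Cmod_mult, Cmod_conj, Cmod_pow, Hw, pow1, Rmult_1_r. reflexivity.
      + apply (ex_series_scal (V := R_NormedModule)), ex_series_geom. rewrite Rabs_right; lra.
    - intros x Hx. rewrite evalA2_geometric by (rewrite Cmod_mult, Cmod_R, Hw; lra).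
      transitivity (ipA2 beta (lft_coef 0 1 (- RtoC x) 1) h).
      + apply csum_ext. intros m. rewrite lft_coef_cauchy. ring.
      + rewrite Hid by (apply Rabs_def2 in Hx; lra). rewrite (Cmult_comm w). unfold Cdiv. ring. }
  apply (inA2_eq0_of_wgt_Cmod_const beta h Hb Hh). intros m.
  pose proof (f_equal Cmod (equal_f Hcoef m)) as E. simpl in E. destruct (wgt_bounds beta m Hb).
  rewrite !Cmod_mult, Cmod_R, !Cmod_conj, Rabs_right, Cmod_pow, Hw, pow1, Rmult_1_r in E by lra.
  exact E.
Qed.

Theorem theorem4p3 (beta : R) (a b c d : Complex.C)
  (T : (nat -> Complex.C) -> (nat -> Complex.C)) :
  (-1 < beta)%R ->
  lf_selfmap a b c d ->
  lf_hyperbolic a b c d ->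
  (* T is the composition operator C_phi f = f o phi on A^2_beta *)
  (forall f, inA2 beta f ->
     inA2 beta (T f) /\
     forall z, (Cmod z < 1)%R -> evalA2 (T f) z = evalA2 f (lft a b c d z)) ->
  ~ complex_symmetric beta T.
Proof.
  intros Hb [_ Hself] [w [Hw [_ [_ [Hatt _]]]]] HT [Cj [S [[CjA2 [_ [_ Cj_iso]]] [HS HCS]]]].
  set (one := geo_tail 1 0 0).
  assert (Hone : inA2 beta one) by (apply (geo_tail_inA2 beta _ _ _ 0); rewrite ?Cmod_0; lra).
  set (h := Cj one).
  assert (Hh : inA2 beta h) by apply CjA2, Hone.
  assert (HSh : S h = h)
    by (unfold h; rewrite <- (HCS one Hone); f_equal; exact (comp_op_one beta a b c d T Hb HT)).
  pose proof (ipA2_iter_adjoint_fixed beta T S h HS (fun f Hf => proj1 (HT f Hf)) Hh HSh) as Hinv.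
  assert (Hzero : forall m, h m = 0%C).
  { apply (inA2_eq0_of_ipA2_cauchy beta h w Hb Hh Hw). intros x Hx.
    apply (ipA2_cauchy_kernel beta a b c d T Hb Hself HT h w Hh Hinv (Req_le _ _ Hw) Hatt).
    rewrite Cmod_R. apply Rabs_def1; lra. }
  assert (E : sqnormA2 beta h = sqnormA2 beta one)
    by (rewrite <- !Re_ipA2_diag; unfold h; rewrite Cj_iso by exact Hone; reflexivity).
  rewrite sqnormA2_one, sqnormA2_eq0 in E by assumption. lra.
Qed.
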